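(* For every odd integer $k\ge 5$, the graph $F_1(k)$ is word-representable.
   Context: For odd $k\ge5$, $F_1(k)$ is the split graph with clique $C=\{c_1,\dots,c_{k-1}\}$ and independent set $I=\{b_1,b_2,a_1,\dots,a_{k-2}\}$, where $N(b_1)=\{c_1,\dots,c_{k-2}\}$, $N(b_2)=\{c_2,\dots,c_{k-1}\}$, and $N(a_i)=\{c_i,c_{i+1}\}$ for $1\le i\le k-2$. A graph $G=(V,E)$ is word-representable if there is a word $w$ over $V$ such that for all distinct $a,b\in V$, $ab\in E$ iff $a$ and $b$ alternate in $w$ (i.e. the subsequence of $w$ formed by all occurrences of $a$ and $b$ is $abab\cdots$ or $baba\cdots$). *)

From mathcomp Require Import all_boot.
Set Implicit Arguments. Unset Strict Implicit. Unset Printing Implicit Defensive.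

(* Vertices of F_1(k), 0-based:
   inl j            : c_{j+1},  j < k-1
   inr (inl j)      : a_{j+1},  j < k-2
   inr (inr false)  : b_1
   inr (inr true)   : b_2 *)
Definition F1V (k : nat) : finType := ('I_(k.-1) + ('I_(k.-2) + bool))%type.

Definition F1adj (k : nat) (x y : F1V k) : bool :=
  match x, y with
  | inl i, inl j => i != j :> nat
  | inl i, inr (inr false) | inr (inr false), inl i => (i <= k - 3)%N
  | inl i, inr (inr true)  | inr (inr true), inl i => (1 <= i)%N
  | inl i, inr (inl j) | inr (inl j), inl i => (i == j :> nat) || (i == j.+1 :> nat)
  | _, _ => false
  end.

Definition alternate (T : eqType) (w : seq T) (x y : T) : bool :=
  let s := filter (fun z => (z == x) || (z == y)) w in
  all (fun p => p.1 != p.2) (zip s (behead s)).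

Definition word_representable (T : finType) (e : rel T) : Prop :=
  exists w : seq T, (forall x : T, x \in w) /\
    forall x y : T, x != y -> (e x y <-> alternate w x y).

From mathcomp Require Import all_boot zify.
Set Implicit Arguments. Unset Strict Implicit. Unset Printing Implicit Defensive.

(* A word in which every letter occurs exactly three times is given by a
   timetable of occurrence times, and two such letters alternate iff their
   times interleave.  With m = k - 1, the word for F_1(k) is cut into 3m
   blocks (indices 0-based as in the vertex encoding): c_{i+1} occurs in
   blocks i, i + m, i + 2m; a_{j+1} in blocks j, j + 2, j + m + 2, all
   shifted by m when j is odd; b_1 in m, 2m - 1, 3m - 1; and b_2 in 0, m,
   2m + 1.  Inside a block the letters are ordered
   b_2 < a_1 < ... < a_{k-2} < b_1 < c's.  Adjacency versus interleaving is
   then a finite check for each kind of pair of vertices; the parity shift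
   of the a_j needs m to be even, i.e. k odd. *)

Definition adjacent_distinct (T : eqType) (s : seq T) : bool :=
  all (fun p => p.1 != p.2) (zip s (behead s)).

Lemma adjacent_distinct_cons (T : eqType) (a : T) (s : seq T) :
  adjacent_distinct (a :: s) = (if s is b :: _ then a != b else true) && adjacent_distinct s.
Proof. by case: s. Qed.

Lemma alternateE (T : eqType) (w : seq T) (x y : T) :
  alternate w x y = adjacent_distinct [seq z <- w | (z == x) || (z == y)].
Proof. by []. Qed.

Section RepeatsSeparated.
Variables (T : eqType) (f : nat -> option T).

Definition repeats_separated (a n : nat) : Prop :=
  forall t1 t2 v, a <= t1 -> t1 < t2 < a + n -> f t1 = Some v -> f t2 = Some v ->
  exists u v', [/\ t1 < u < t2, f u = Some v' & v' != v].

Lemma pmap_iota_nil a n t :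
  pmap f (iota a n) = [::] -> a <= t < a + n -> f t = None.
Proof.
elim: n a => [|n IHn] a /=; first lia.
case fa: (f a) => //= /IHn {}IHn ta.
by case: (eqVneq t a) => [->//|neq]; apply: IHn; lia.
Qed.

Lemma pmap_iota_cons a n c s :
  pmap f (iota a n) = c :: s ->
  exists2 u, a <= u < a + n & f u = Some c /\ forall t, a <= t < u -> f t = None.
Proof.
elim: n a => [|n IHn] a //=.
case fa: (f a) => [d|] /=.
  by case=> <- _; exists a; [lia | split=> // t; lia].
move=> /IHn[u au [fu fNone]]; exists u; first lia; split=> // t tu.
by case: (eqVneq t a) => [->//|neq]; apply: fNone; lia.
Qed.

Lemma adjacent_distinct_pmap_iota a n :
  adjacent_distinct (pmap f (iota a n)) <-> repeats_separated a n.
Proof.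
elim: n a => [|n IHn] a; first by split=> // _ t1 t2 v; lia.
rewrite /=; case fa: (f a) => [c|] /=; last first.
  rewrite IHn; split=> sep t1 t2 v at1 t12 ft1 ft2; apply: sep => //; try lia.
  by case: (eqVneq t1 a) fa ft1 => [->->|]; last lia.
rewrite adjacent_distinct_cons; split.
- case/andP=> head_neq /IHn sep t1 t2 v at1 t12 ft1 ft2.
  case: (eqVneq t1 a) => [t1a|t1a]; last by apply: sep => //; lia.
  move: ft1; rewrite t1a fa => -[cv]; subst t1 v.
  case rest: (pmap f (iota a.+1 n)) head_neq => [|d s] neq.
    by rewrite (pmap_iota_nil rest) in ft2; last lia.
  have [u au [fu fNone]] := pmap_iota_cons rest.
  have ut2 : u <= t2 by case: leqP => // t2u; rewrite fNone in ft2; last lia.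
  exists u, d; split=> //; last by rewrite eq_sym.
  case: (eqVneq u t2) fu => [->|]; last lia.
  by rewrite ft2 => -[dc]; rewrite dc eqxx in neq.
- move=> sep; apply/andP; split; last first.
    by apply/IHn => t1 t2 v at1 t12; apply: sep; lia.
  case rest: (pmap f (iota a.+1 n)) => [|d s] //.
  have [u au [fu fNone]] := pmap_iota_cons rest.
  apply/eqP => cd; subst d.
  have [w [v' [aw fw _]]] := sep a u c (leqnn a) ltac:(lia) fa fu.
  by rewrite fNone in fw; last lia.
Qed.

End RepeatsSeparated.

Definition separates (s1 s2 : seq nat) : Prop :=
  forall t1 t2, t1 \in s2 -> t2 \in s2 -> t1 < t2 -> has (fun u => t1 < u < t2) s1.

Section TwoLetters.
Variables (T : eqType) (x y : T) (sx sy : seq nat).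
Hypotheses (neq_xy : x != y) (disj : forall t, t \in sx -> t \notin sy).

Definition label2 (t : nat) : option T :=
  if t \in sx then Some x else if t \in sy then Some y else None.

Lemma label2_x t : t \in sx -> label2 t = Some x.
Proof. by rewrite /label2 => ->. Qed.

Lemma label2_y t : t \in sy -> label2 t = Some y.
Proof. by move=> ty; rewrite /label2 ty; case: ifP => // /disj; rewrite ty. Qed.

Lemma label2_Some t v :
  label2 t = Some v -> (v = x /\ t \in sx) \/ (v = y /\ t \in sy).
Proof. by rewrite /label2; do 2?case: ifP => ? //; case=> <-; auto. Qed.

Lemma repeats_separated_label2 N :
  (forall t, (t \in sx) || (t \in sy) -> t < N) ->
  repeats_separated label2 0 N <-> separates sy sx /\ separates sx sy.
Proof.
move=> bounded; split=> [sep | [sep_x sep_y]].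
  have separates_of v s1 s2 :
      {in s2, forall t, label2 t = Some v} ->
      (forall u v', label2 u = Some v' -> v' != v -> u \in s1) -> separates s1 s2.
    move=> lab2 other t1 t2 t1s t2s t12; apply/hasP.
    have t2N : t2 < 0 + N.
      by apply: bounded; case: (label2_Some (lab2 _ t2s)) => -[_ ->]; rewrite ?orbT.
    have [u [v' [t1ut2 lu v'v]]] :=
      sep t1 t2 v (leq0n t1) (introT andP (conj t12 t2N)) (lab2 _ t1s) (lab2 _ t2s).
    by exists u => //; apply: other v'v.
  split; [apply: (separates_of x) | apply: (separates_of y)].
  - exact: label2_x.
  - by move=> u v' /label2_Some[] [-> ?] //; rewrite eqxx.
  - exact: label2_y.
  - by move=> u v' /label2_Some[] [-> ?] //; rewrite eqxx.
move=> t1 t2 v _ /andP[t12 _] /label2_Some[] [-> t1s] /label2_Some[] [vv t2s];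
  try by move: neq_xy; rewrite vv eqxx.
- have /hasP[u us t1ut2] := sep_x t1 t2 t1s t2s t12.
  by exists u, y; split=> //; [apply: label2_y | rewrite eq_sym].
- have /hasP[u us t1ut2] := sep_y t1 t2 t1s t2s t12.
  by exists u, x; split=> //; apply: label2_x.
Qed.

End TwoLetters.

Definition interleaved (A : Type) (lt : rel A) (sx sy : seq A) : Prop :=
  match sx, sy with
  | [:: x1; x2; x3], [:: y1; y2; y3] =>
      (lt x1 y1 /\ lt y1 x2 /\ lt x2 y2 /\ lt y2 x3 /\ lt x3 y3) \/
      (lt y1 x1 /\ lt x1 y2 /\ lt y2 x2 /\ lt x2 y3 /\ lt y3 x3)
  | _, _ => False
  end.

Lemma separates_interleaved (x1 x2 x3 y1 y2 y3 : nat) :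
  x1 < x2 < x3 -> y1 < y2 < y3 ->
  separates [:: y1; y2; y3] [:: x1; x2; x3] /\ separates [:: x1; x2; x3] [:: y1; y2; y3] <->
  interleaved ltn [:: x1; x2; x3] [:: y1; y2; y3].
Proof.
move=> /andP[x12 x23] /andP[y12 y23]; split.
- case=> sep_x sep_y.
  have mem1 (a b c : nat) : a \in [:: a; b; c] by rewrite inE eqxx.
  have mem2 (a b c : nat) : b \in [:: a; b; c] by rewrite !inE eqxx orbT.
  have mem3 (a b c : nat) : c \in [:: a; b; c] by rewrite !inE eqxx !orbT.
  move: (sep_x _ _ (mem1 _ _ _) (mem2 _ _ _) x12) (sep_x _ _ (mem2 _ _ _) (mem3 _ _ _) x23)
        (sep_y _ _ (mem1 _ _ _) (mem2 _ _ _) y12) (sep_y _ _ (mem2 _ _ _) (mem3 _ _ _) y23).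
  by rewrite /= !orbF => /or3P[] ? /or3P[] ? /or3P[] ? /or3P[] ?; rewrite /interleaved; lia.
- move=> /= ilv; split=> t1 t2; rewrite !inE => /or3P[]/eqP-> /or3P[]/eqP-> /=; lia.
Qed.

Section PlacementWord.
Variables (T : finType) (time : T -> seq nat) (N : nat).

Definition placement_word : seq T :=
  flatten [seq [seq v <- enum T | t \in time v] | t <- iota 0 N].

Lemma mem_placement_word x t : t \in time x -> t < N -> x \in placement_word.
Proof.
move=> tx tN; apply/flatten_mapP; exists t; first by rewrite mem_iota.
by rewrite mem_filter tx mem_enum.
Qed.

Lemma filter_placement_word x y :
  x != y -> (forall t, t \in time x -> t \notin time y) ->
  [seq z <- placement_word | (z == x) || (z == y)] =
    pmap (label2 x y (time x) (time y)) (iota 0 N).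
Proof.
move=> neq_xy disj; rewrite /placement_word; elim: (iota 0 N) => //= t ts IHts.
rewrite filter_cat IHts -filter_predI /label2.
have block P z : z \in enum T -> (forall v, P v = (v == z)) -> [seq v <- enum T | P v] = [:: z].
  by move=> zT Pz; rewrite (eq_filter Pz) filter_pred1_uniq ?enum_uniq.
case: ifP => tx; [|case: ifP => ty].
- rewrite (block _ x) ?mem_enum // => v /=.
  case: (eqVneq v x) => [->|_]; first by rewrite tx.
  by case: (eqVneq v y) => //= ->; apply/negbTE/disj.
- rewrite (block _ y) ?mem_enum // => v /=.
  by case: (eqVneq v y) => [->|_]; [rewrite ty orbT | case: eqP => // ->; rewrite tx].
- rewrite (@eq_filter _ _ pred0) ?filter_pred0 // => v /=.
  by case: eqP => [->|_]; [rewrite tx | case: eqP => // ->; rewrite ty].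
Qed.

End PlacementWord.

Definition lexltn (p q : nat * nat) : bool :=
  (p.1 < q.1) || (p.1 == q.1) && (p.2 < q.2).

Definition enc (S : nat) (p : nat * nat) : nat := p.1 * S + p.2.

Lemma ltn_enc S p q : p.2 < S -> q.2 < S -> (enc S p < enc S q) = lexltn p q.
Proof.
case: p q => [g1 r1] [g2 r2] /= r1S r2S; rewrite /enc /lexltn /=.
case: (ltngtP g1 g2) => [g12|g21|->] /=; last lia.
- have: g1.+1 * S <= g2 * S by rewrite leq_mul2r g12 orbT.
  by rewrite mulSn; lia.
- have: g2.+1 * S <= g1 * S by rewrite leq_mul2r g21 orbT.
  by rewrite mulSn; lia.
Qed.

Lemma eqn_enc S p q : p.2 < S -> q.2 < S -> (enc S p == enc S q) = (p == q).
Proof.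
move=> pS qS; have := ltn_enc pS qS; have := ltn_enc qS pS.
case: p q {pS qS} => [g1 r1] [g2 r2]; rewrite /lexltn xpair_eqE /=; lia.
Qed.

Section F1Word.
Variable k : nat.
Hypotheses (k_odd : odd k) (k_ge5 : 4 < k).
Local Notation m := k.-1.
Local Notation S := (m + 2).
Local Notation N := (3 * m * S).

Let k_double : k = k./2.*2.+1.
Proof. by rewrite -{1}(odd_double_half k) k_odd. Qed.

Definition F1blocks (v : F1V k) : seq nat :=
  match v with
  | inl j => [:: (j : nat); j + m; j + 2 * m]
  | inr (inl j) => [:: j + odd j * m; j + 2 + odd j * m; j + 2 + m + odd j * m]
  | inr (inr false) => [:: m; 2 * m - 1; 3 * m - 1]
  | inr (inr true) => [:: 0; m; 2 * m + 1]
  end.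

Definition F1rank (v : F1V k) : nat :=
  match v with
  | inl _ => m.+1
  | inr (inl j) => j.+1
  | inr (inr false) => m
  | inr (inr true) => 0
  end.

Definition F1slots (v : F1V k) : seq (nat * nat) := [seq (g, F1rank v) | g <- F1blocks v].

Definition F1time (v : F1V k) : seq nat := map (enc S) (F1slots v).

Definition F1word : seq (F1V k) := placement_word F1time N.

Lemma F1rank_lt v : F1rank v < S.
Proof. by case: v => [i|[j|[]]] /=; rewrite ?addn2 //; have := ltn_ord j; lia. Qed.

Lemma F1blocks_shape v :
  exists g1 g2 g3, F1blocks v = [:: g1; g2; g3] /\ (g1 < g2 < g3) && (g3 < 3 * m).
Proof.
have kq := k_double.
case: v => [i|[j|[]]]; do 3 eexists; split; try reflexivity;
  [have := ltn_ord i | have := ltn_ord j; have := odd_double_half j; case: (odd j) | |];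
  move=> /=; lia.
Qed.

Lemma F1blocks_disjoint x y g :
  x != y -> F1rank x = F1rank y -> g \in F1blocks x -> g \notin F1blocks y.
Proof.
case: x => [i|[i|[]]]; case: y => [j|[j|[]]] nxy; rewrite ?eqxx // /= !inE;
  try (have: (i : nat) != j by apply: contraNneq nxy => /val_inj ->);
  try have := ltn_ord i; try have := ltn_ord j; lia.
Qed.

Lemma F1time_disjoint x y t : x != y -> t \in F1time x -> t \notin F1time y.
Proof.
move=> nxy /mapP[[g r] /mapP[g' gx [-> ->]] ->]; apply/mapP => -[[h s] /mapP[h' hy [-> ->]]].
move/eqP; rewrite eqn_enc ?F1rank_lt // xpair_eqE => /andP[/eqP gh /eqP rxy].
by move: hy; rewrite -gh; apply/negP/(F1blocks_disjoint nxy rxy).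
Qed.

Lemma F1time_lt v t : t \in F1time v -> t < N.
Proof.
have [g1 [g2 [g3 [gv /andP[/andP[g12 g23] g3m]]]]] := F1blocks_shape v.
rewrite /F1time /F1slots gv /= !inE => tv.
have gS g : g < 3 * m -> enc S (g, F1rank v) < N.
  move=> gm; rewrite /enc /=; have := F1rank_lt v.
  have: g.+1 * S <= 3 * m * S by rewrite leq_mul2r gm orbT.
  rewrite mulSn; lia.
by case/or3P: tv => /eqP ->; apply: gS; lia.
Qed.

Lemma mem_F1word v : v \in F1word.
Proof.
have [g1 [g2 [g3 [gv _]]]] := F1blocks_shape v.
have tv : enc S (g1, F1rank v) \in F1time v by rewrite /F1time /F1slots gv inE eqxx.
exact: mem_placement_word tv (F1time_lt tv).
Qed.

Lemma alternate_F1word x y :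
  x != y -> alternate F1word x y <-> interleaved lexltn (F1slots x) (F1slots y).
Proof.
move=> nxy.
have [g1 [g2 [g3 [gx /andP[gsorted _]]]]] := F1blocks_shape x.
have [h1 [h2 [h3 [hy /andP[hsorted _]]]]] := F1blocks_shape y.
have enc_sorted v a b c : a < b < c ->
    enc S (a, F1rank v) < enc S (b, F1rank v) < enc S (c, F1rank v).
  by rewrite !ltn_enc ?F1rank_lt // /lexltn /= => /andP[-> ->].
have disj t : t \in F1time x -> t \notin F1time y := F1time_disjoint nxy.
have bounded t : (t \in F1time x) || (t \in F1time y) -> t < N by case/orP=> /F1time_lt.
rewrite alternateE (filter_placement_word _ nxy disj) adjacent_distinct_pmap_iota.
rewrite (repeats_separated_label2 nxy disj bounded).
rewrite /F1time /F1slots gx hy /= separates_interleaved ?enc_sorted //.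
by rewrite /interleaved /interleaved /= !ltn_enc ?F1rank_lt.
Qed.

Lemma F1adj_interleaved x y :
  x != y -> F1adj x y <-> interleaved lexltn (F1slots x) (F1slots y).
Proof.
have kq := k_double.
case: x => [i|[i|[]]]; case: y => [j|[j|[]]] nxy; rewrite ?eqxx // /interleaved /lexltn /=;
  try (have: (i : nat) != j by apply: contraNneq nxy => /val_inj ->);
  try have := ltn_ord i; try have := ltn_ord j;
  try (have := odd_double_half i; case: (odd i));
  try (have := odd_double_half j; case: (odd j)); lia.
Qed.

End F1Word.

Theorem lemma13 (k : nat) : odd k -> (5 <= k)%N ->
  word_representable (@F1adj k).
Proof.
move=> k_odd k_ge5; exists (F1word k); split=> [v | x y nxy].
  exact: mem_F1word.
by rewrite alternate_F1word // F1adj_interleaved.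
Qed.
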